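(* Let $b>0$ and let $F$ be as defined in the context. Then $F$ is strictly decreasing on $(x_\infty,x_0)$, $F\in C^\infty((x_\infty,x_0])$, and $$\lim_{x\downarrow x_\infty}F(x)=+\infty,\qquad \lim_{x\downarrow x_\infty}F'(x)=-\infty.$$
   Context: Constants: $a\in\mathbb{R}$, $b>0$, $\sigma>0$, $\rho>0$, $c>0$, $\alpha>0$. For $\beta<0$, let $D_\beta(x)=\frac{e^{-x^2/4}}{\Gamma(-\beta)}\int_0^\infty t^{-\beta-1}e^{-t^2/2-xt}\,dt$, and $\psi(x)=e^{\frac{(bx-a)^2}{2\sigma^2 b}}D_{-\rho/b}\big(-\frac{bx-a}{\sigma b}\sqrt{2b}\big)$, the positive strictly increasing fundamental solution of $\frac12\sigma^2u''+(a-bx)u'-\rho u=0$ (it satisfies $\psi''\psi-(\psi')^2>0$). Let $x_0$ (resp. $x_\infty$) be the unique solution on $(c,\infty)$ of $(x-c)\psi'(x)-\psi(x)=0$ (resp. $(x-c)\psi''(x)-\psi'(x)=0$); one has $c<x_\infty<x_0$. For $x\in(x_\infty,x_0]$ define $F(x)=\int_x^{x_0}\Theta(z)\,dz$ where $$\Theta(z)=\frac{\big[\psi'''(z)\big((z-c)\psi'(z)-\psi(z)\big)-\psi''(z)\big((z-c)\psi''(z)-\psi'(z)\big)\big]\psi(z)}{-\alpha\big[\psi''(z)\psi(z)-\psi'(z)^2\big]\big[(z-c)\psi''(z)-\psi'(z)\big]}.$$ *)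

From Stdlib Require Import Reals.
From Coquelicot Require Import Coquelicot.
Open Scope R_scope.

Definition Gamma (s : R) : R :=
  RInt_gen (fun t => Rpower t (s - 1) * exp (- t)) (at_right 0) (Rbar_locally p_infty).

(* Parabolic cylinder function, integral representation for beta < 0:
   D_beta(x) = e^{-x^2/4}/Gamma(-beta) * int_0^oo t^{-beta-1} e^{-t^2/2 - x t} dt *)
Definition Dpc (beta x : R) : R :=
  exp (- x ^ 2 / 4) / Gamma (- beta) *
  RInt_gen (fun t => Rpower t (- beta - 1) * exp (- t ^ 2 / 2 - x * t))
           (at_right 0) (Rbar_locally p_infty).

Definition psi (a b sigma rho : R) (x : R) : R :=
  exp ((b * x - a) ^ 2 / (2 * sigma ^ 2 * b)) *
  Dpc (- rho / b) (- ((b * x - a) / (sigma * b)) * sqrt (2 * b)).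

Definition Theta (a b sigma rho c alpha : R) (z : R) : R :=
  let p := psi a b sigma rho in
  let p0 := p z in
  let p1 := Derive_n p 1 z in
  let p2 := Derive_n p 2 z in
  let p3 := Derive_n p 3 z in
  ((p3 * ((z - c) * p1 - p0) - p2 * ((z - c) * p2 - p1)) * p0) /
  (- alpha * (p2 * p0 - p1 ^ 2) * ((z - c) * p2 - p1)).

Definition Ffun (a b sigma rho c alpha x0 : R) (x : R) : R :=
  RInt (Theta a b sigma rho c alpha) x x0.

From Stdlib Require Import Reals Lra Lia FunctionalExtensionality.
From Coquelicot Require Import Coquelicot.
Open Scope R_scope.

(* With [nu = rho / b], the integral representation of [D] gives [psi = Gamma(nu)^-1 Q_0] where
   [Q_k x = beta^k M_k (L x)], [M_k s = int_0^oo t^(nu-1+k) exp(-t^2/2 + s t) dt] and [L] is affine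
   of slope [beta].  Differentiating under the integral sign, [Q_k' = Q_(k+1)]; moreover [Q_k > 0]
   and, by Cauchy-Schwarz, [Q_2 Q_0 > Q_1^2].  Theta is invariant under rescaling of [psi], so it
   may be computed from [Q]: with [g = (z-c) Q_1 - Q_0] and [h = (z-c) Q_2 - Q_1] one has
   [g' = (z-c) Q_2 > 0], [h' = (z-c) Q_3 > 0] on (c, oo), and log-convexity gives [g xinf < 0].
   Hence [xinf < x0], [g < 0 < h] on (xinf, x0) and
   [Theta = - (Q_3 g - Q_2 h) Q_0 / (alpha (Q_2 Q_0 - Q_1^2) h) > 0] there.  As [h] has a simple
   zero at [xinf], [Theta z >= K / (z - xinf)] near [xinf]; this is not integrable, so [F -> +oo],
   while [F' = - Theta -> -oo]. *)

Lemma ball_R_interval (x y : R) (e : R) : ball x e y -> x - e < y < x + e.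
Proof. intros H. change (Rabs (y - x) < e) in H. apply Rabs_def2 in H. lra. Qed.

Lemma ex_RInt_continuous_pos (f : R -> R) a b :
  0 < a -> a <= b -> (forall t, 0 < t -> continuous f t) -> ex_RInt f a b.
Proof.
  intros Ha Hab Hf. apply (ex_RInt_continuous (V := R_CompleteNormedModule)).
  intros t Ht. rewrite Rmin_left in Ht by lra. apply Hf. lra.
Qed.

Lemma RInt_nonneg_le_superinterval (f : R -> R) a b a' b' :
  0 < a -> a <= a' -> a' <= b' -> b' <= b ->
  (forall t, 0 < t -> continuous f t) -> (forall t, 0 < t -> 0 <= f t) ->
  RInt f a' b' <= RInt f a b.
Proof.
  intros Ha Haa' Ha'b' Hb'b Hf Hf0.
  assert (Hex : forall u v, a <= u -> u <= v -> ex_RInt f u v)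
    by (intros; apply ex_RInt_continuous_pos; auto; lra).
  assert (Hpos : forall u v, a <= u -> u <= v -> 0 <= RInt f u v)
    by (intros u v Hu Huv; apply RInt_ge_0; auto; intros; apply Hf0; lra).
  rewrite <- (RInt_Chasles f a b' b), <- (RInt_Chasles f a a' b') by (apply Hex; lra).
  change plus with Rplus.
  pose proof (Hpos a a' ltac:(lra) Haa'). pose proof (Hpos b' b ltac:(lra) Hb'b). lra.
Qed.

(* The improper integral is the supremum of the integrals over compact subintervals. *)
Lemma is_RInt_gen_nonneg_bounded (f : R -> R) B :
  (forall t, 0 < t -> continuous f t) -> (forall t, 0 < t -> 0 <= f t) ->
  (forall a b, 0 < a -> a <= b -> RInt f a b <= B) ->
  exists L : R, is_RInt_gen f (at_right 0) (Rbar_locally p_infty) L /\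
    (forall a b, 0 < a -> a <= b -> RInt f a b <= L).
Proof.
  intros Hf Hf0 HB.
  set (E := fun y => exists a b, 0 < a /\ a <= b /\ y = RInt f a b).
  destruct (completeness E) as [L [HLub HLleast]].
  { exists B. intros y (a & b & Ha & Hab & ->). auto. }
  { exists (RInt f 1 1), 1, 1. repeat split; lra. }
  assert (HL : forall a b, 0 < a -> a <= b -> RInt f a b <= L)
    by (intros a b Ha Hab; apply HLub; exists a, b; auto).
  exists L. split; [|exact HL].
  intros P [eps Heps].
  assert (Happrox : exists a0 b0, 0 < a0 /\ a0 <= b0 /\ L - eps < RInt f a0 b0).
  { apply Classical_Prop.NNPP. intros Hno.
    assert (L <= L - eps); [|destruct eps; simpl in *; lra].
    apply HLleast. intros y (a & b & Ha & Hab & ->).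
    apply Rnot_lt_le. intros Hlt. apply Hno. exists a, b. auto. }
  destruct Happrox as (a0 & b0 & Ha0 & Hab0 & Hlt).
  exists (fun a => 0 < a < a0) (fun b => b0 < b).
  - exists (mkposreal a0 Ha0). intros y Hy Hy0. split; [exact Hy0|].
    apply ball_R_interval in Hy. simpl in Hy. lra.
  - exists b0. auto.
  - intros a b [Ha Ha'] Hb. exists (RInt f a b). split.
    + apply (RInt_correct (V := R_CompleteNormedModule)).
      apply ex_RInt_continuous_pos; auto; lra.
    + apply Heps.
      assert (RInt f a0 b0 <= RInt f a b)
        by (apply RInt_nonneg_le_superinterval; auto; lra).
      assert (RInt f a b <= L) by (apply HL; lra).
      change (Rabs (RInt f a b - L) < eps). apply Rabs_def1; lra.
Qed.

Lemma exp_le_exp_of_le x y : x <= y -> exp x <= exp y.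
Proof. intros [H | ->]; [left; apply exp_increasing | right]; auto. Qed.

Lemma Rpower_le_exp_mul t y : 0 < t -> 0 <= y -> Rpower t y <= exp (y * t).
Proof.
  intros Ht Hy. unfold Rpower. apply exp_le_exp_of_le, Rmult_le_compat_l; auto.
  assert (t < exp t) by (pose proof (exp_ineq1_le t); lra).
  rewrite <- (ln_exp t) at 2. left; apply ln_increasing; auto.
Qed.

Lemma continuous_of_ex_derive (f : R -> R) x : ex_derive f x -> continuous f x.
Proof. apply (ex_derive_continuous (K := R_AbsRing) (V := R_NormedModule)). Qed.

Definition weight (nu : R) (k : nat) (s t : R) : R :=
  Rpower t (nu - 1 + INR k) * exp (- t ^ 2 / 2 + s * t).

Lemma weight_pos nu k s t : 0 < weight nu k s t.
Proof. unfold weight, Rpower. apply Rmult_lt_0_compat; apply exp_pos. Qed.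

Lemma weight_continuous nu k s t : 0 < t -> continuous (weight nu k s) t.
Proof. intros Ht. apply continuous_of_ex_derive. unfold weight, Rpower. auto_derive. auto. Qed.

Lemma weight_S nu k s t : 0 < t -> weight nu (S k) s t = t * weight nu k s t.
Proof.
  intros Ht. unfold weight. rewrite S_INR.
  replace (nu - 1 + (INR k + 1)) with (nu - 1 + INR k + 1) by ring.
  rewrite Rpower_plus, Rpower_1 by auto. ring.
Qed.

Lemma weight_shift nu k s h t : weight nu k (s + h) t = weight nu k s t * exp (h * t).
Proof. unfold weight. rewrite Rmult_assoc, <- exp_plus. do 2 f_equal. ring. Qed.

(* [t^(nu-1) / (1 + t^nu)^2] has total mass [1/nu] on (0, +oo) and, up to a constant
   factor, dominates every weight. *)
Definition dominant (nu t : R) : R := Rpower t nu / t / (1 + Rpower t nu) ^ 2.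

Lemma is_derive_dominant_primitive nu t : 0 < nu -> 0 < t ->
  is_derive (fun u => - / (nu * (1 + Rpower u nu))) t (dominant nu t).
Proof.
  intros Hnu Ht. unfold dominant, Rpower.
  assert (0 < exp (nu * ln t)) by apply exp_pos.
  auto_derive.
  - repeat split; auto. apply Rgt_not_eq, Rmult_lt_0_compat; lra.
  - field. repeat split; lra.
Qed.

Lemma dominant_continuous nu t : 0 < t -> continuous (dominant nu) t.
Proof.
  intros Ht. apply continuous_of_ex_derive. unfold dominant, Rpower.
  assert (0 < exp (nu * ln t)) by apply exp_pos.
  auto_derive. repeat split; try lra. apply Rgt_not_eq; nra.
Qed.

Lemma RInt_dominant_le nu a b : 0 < nu -> 0 < a -> a <= b -> RInt (dominant nu) a b <= / nu.
Proof.
  intros Hnu Ha Hab.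
  assert (H := is_RInt_derive (V := R_CompleteNormedModule)
                 (fun u => - / (nu * (1 + Rpower u nu))) (dominant nu) a b).
  rewrite Rmin_left, Rmax_right in H by lra.
  rewrite (is_RInt_unique _ _ _ _ (H (fun t Ht => is_derive_dominant_primitive nu t Hnu ltac:(lra))
                                     (fun t Ht => dominant_continuous nu t ltac:(lra)))).
  change minus with Rminus. unfold Rpower.
  assert (0 < exp (nu * ln a)) by apply exp_pos.
  assert (0 < exp (nu * ln b)) by apply exp_pos.
  assert (0 < / (nu * (1 + exp (nu * ln b))))
    by (apply Rinv_0_lt_compat, Rmult_lt_0_compat; lra).
  assert (/ (nu * (1 + exp (nu * ln a))) <= / nu)
    by (apply Rinv_le_contravar; nra).
  lra.
Qed.

Definition weight_bound (nu : R) (k : nat) (s : R) : R :=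
  4 * exp ((INR k + 2 * nu + s) ^ 2 / 2).

Lemma weight_bound_pos nu k s : 0 < weight_bound nu k s.
Proof. unfold weight_bound. pose proof (exp_pos ((INR k + 2 * nu + s) ^ 2 / 2)). lra. Qed.

Lemma weight_le_dominant nu k s t : 0 < nu -> 0 < t ->
  weight nu k s t <= weight_bound nu k s * dominant nu t.
Proof.
  intros Hnu Ht. unfold weight, dominant, weight_bound.
  replace (nu - 1 + INR k) with (nu + - (1) + INR k) by ring.
  rewrite !Rpower_plus, Rpower_Ropp, Rpower_1 by auto.
  assert (Hu := Rpower_le_exp_mul t nu Ht ltac:(lra)).
  assert (Hp := Rpower_le_exp_mul t (INR k) Ht (pos_INR k)).
  assert (0 < Rpower t nu) by (unfold Rpower; apply exp_pos).
  assert (0 < Rpower t (INR k)) by (unfold Rpower; apply exp_pos).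
  set (u := Rpower t nu) in *. set (p := Rpower t (INR k)) in *.
  set (m := INR k + 2 * nu + s).
  set (g := exp (- t ^ 2 / 2 + s * t)).
  assert (Hg : 0 < g) by apply exp_pos.
  assert (1 <= exp (nu * t))
    by (pose proof (exp_ineq1_le (nu * t)); assert (0 < nu * t) by nra; lra).
  assert (Hsq : (1 + u) ^ 2 <= 4 * exp (2 * nu * t)).
  { replace (2 * nu * t) with (nu * t + nu * t) by ring. rewrite exp_plus. nra. }
  assert (Hgauss : exp (INR k * t) * g * exp (2 * nu * t) <= exp (m ^ 2 / 2)).
  { unfold g. rewrite <- !exp_plus. apply exp_le_exp_of_le.
    assert (0 <= (t - m) ^ 2) by apply pow2_ge_0. unfold m in *. nra. }
  assert (Hnum : p * g * (1 + u) ^ 2 <= 4 * exp (m ^ 2 / 2)).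
  { apply Rle_trans with (exp (INR k * t) * g * (4 * exp (2 * nu * t))); [|nra].
    assert (0 <= (1 + u) ^ 2) by apply pow2_ge_0.
    apply Rmult_le_compat; [nra | nra | apply Rmult_le_compat_r; lra | exact Hsq]. }
  assert (0 < (1 + u) ^ 2) by (apply pow_lt; lra).
  apply Rmult_le_reg_r with ((1 + u) ^ 2 * t / u).
  { apply Rdiv_lt_0_compat; auto. apply Rmult_lt_0_compat; auto. }
  replace (u * / t * p * g * ((1 + u) ^ 2 * t / u)) with (p * g * (1 + u) ^ 2) by (field; lra).
  replace (4 * exp (m ^ 2 / 2) * (u / t / (1 + u) ^ 2) * ((1 + u) ^ 2 * t / u))
    with (4 * exp (m ^ 2 / 2)) by (field; lra).
  exact Hnum.
Qed.

Lemma RInt_weight_le nu k s a b : 0 < nu -> 0 < a -> a <= b ->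
  RInt (weight nu k s) a b <= weight_bound nu k s / nu.
Proof.
  intros Hnu Ha Hab. pose proof (weight_bound_pos nu k s).
  assert (Hdom : ex_RInt (dominant nu) a b)
    by (apply ex_RInt_continuous_pos; auto; intros; apply dominant_continuous; auto).
  apply Rle_trans with (RInt (fun t => weight_bound nu k s * dominant nu t) a b).
  - apply RInt_le; auto.
    + apply ex_RInt_continuous_pos; auto. intros; apply weight_continuous; auto.
    + apply (ex_RInt_scal (V := R_CompleteNormedModule)); auto.
    + intros t Ht. apply weight_le_dominant; auto; lra.
  - rewrite (RInt_scal (V := R_CompleteNormedModule)) by auto.
    unfold Rdiv. apply Rmult_le_compat_l; [lra|]. apply RInt_dominant_le; auto.
Qed.

Definition moment (nu : R) (k : nat) (s : R) : R :=
  RInt_gen (weight nu k s) (at_right 0) (Rbar_locally p_infty).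

Lemma moment_spec nu k s : 0 < nu ->
  is_RInt_gen (weight nu k s) (at_right 0) (Rbar_locally p_infty) (moment nu k s) /\
  (forall a b, 0 < a -> a <= b -> RInt (weight nu k s) a b <= moment nu k s).
Proof.
  intros Hnu.
  destruct (is_RInt_gen_nonneg_bounded (weight nu k s) (weight_bound nu k s / nu))
    as [L [HL Hbound]].
  - intros; apply weight_continuous; auto.
  - intros; left; apply weight_pos.
  - intros; apply RInt_weight_le; auto.
  - unfold moment. rewrite (is_RInt_gen_unique _ _ HL). auto.
Qed.

Lemma moment_pos nu k s : 0 < nu -> 0 < moment nu k s.
Proof.
  intros Hnu. apply Rlt_le_trans with (RInt (weight nu k s) 1 2).
  - apply RInt_gt_0; [lra | intros; apply weight_pos | intros; apply weight_continuous; lra].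
  - apply (moment_spec nu k s Hnu); lra.
Qed.

Lemma exp_taylor1_bound x : Rabs (exp x - 1 - x) <= x ^ 2 * exp (Rabs x).
Proof.
  destruct (MVT_cor4 (fun y => exp y - 1 - y) (fun y => exp y - 1) 0 (Rabs x)) with (b := x)
    as [c [Hc1 Hc2]].
  { intros c _. auto_derive; auto. ring. }
  { rewrite Rminus_0_r; lra. }
  destruct (MVT_cor4 exp exp 0 (Rabs c)) with (b := c) as [d [Hd1 Hd2]].
  { intros d _. auto_derive; auto. ring. }
  { rewrite Rminus_0_r; lra. }
  rewrite exp_0 in Hc1, Hd1. rewrite !Rminus_0_r in *.
  replace (exp x - 1 - x) with ((exp c - 1) * x) by lra.
  rewrite Hd1, !Rabs_mult, <- (pow2_abs x).
  assert (Rabs (exp d) <= exp (Rabs x)).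
  { rewrite Rabs_pos_eq by (left; apply exp_pos). apply exp_le_exp_of_le.
    pose proof (Rle_abs d). lra. }
  pose proof (Rabs_pos c). pose proof (Rabs_pos x). pose proof (Rabs_pos (exp d)).
  apply Rle_trans with (exp (Rabs x) * Rabs x * Rabs x); [|right; ring].
  apply Rmult_le_compat_r; auto. apply Rmult_le_compat; auto.
Qed.

(* The factors [1] and [-1] give the integrand the shape produced by [is_RInt_gen_scal] below. *)
Lemma weight_taylor1_bound nu k s h t : 0 < t -> Rabs h <= 1 ->
  Rabs (1 * weight nu k (s + h) t + (-1) * weight nu k s t + (- h) * weight nu (S k) s t)
    <= h ^ 2 * weight nu (S (S k)) (s + 1) t.
Proof.
  intros Ht Hh.
  rewrite weight_shift, (weight_S nu (S k) (s + 1) t Ht), (weight_S nu k (s + 1) t Ht),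
    (weight_S nu k s t Ht), weight_shift.
  assert (Hw := weight_pos nu k s t). set (W := weight nu k s t) in *.
  replace (1 * (W * exp (h * t)) + -1 * W + - h * (t * W))
    with (W * (exp (h * t) - 1 - h * t)) by ring.
  rewrite Rabs_mult, (Rabs_pos_eq W) by lra.
  assert (exp (Rabs (h * t)) <= exp (1 * t)).
  { apply exp_le_exp_of_le. rewrite Rabs_mult, (Rabs_pos_eq t) by lra.
    apply Rmult_le_compat_r; lra. }
  assert (0 <= (h * t) ^ 2) by apply pow2_ge_0.
  apply Rle_trans with (W * ((h * t) ^ 2 * exp (Rabs (h * t)))).
  - apply Rmult_le_compat_l; [lra | apply exp_taylor1_bound].
  - replace (h ^ 2 * (t * (t * (W * exp (1 * t))))) with (W * ((h * t) ^ 2 * exp (1 * t))) by ring.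
    apply Rmult_le_compat_l; [lra|]. apply Rmult_le_compat_l; auto.
Qed.

Lemma moment_taylor1_bound nu k s h : 0 < nu -> Rabs h <= 1 ->
  Rabs (moment nu k (s + h) - moment nu k s - h * moment nu (S k) s)
    <= h ^ 2 * moment nu (S (S k)) (s + 1).
Proof.
  intros Hnu Hh.
  destruct (moment_spec nu k (s + h) Hnu) as [I1 _].
  destruct (moment_spec nu k s Hnu) as [I2 _].
  destruct (moment_spec nu (S k) s Hnu) as [I3 _].
  destruct (moment_spec nu (S (S k)) (s + 1) Hnu) as [I4 _].
  assert (Icomb := is_RInt_gen_plus _ _ _ _
    (is_RInt_gen_plus _ _ _ _ (is_RInt_gen_scal _ 1 _ I1) (is_RInt_gen_scal _ (-1) _ I2))
    (is_RInt_gen_scal _ (- h) _ I3)).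
  replace (moment nu k (s + h) - moment nu k s - h * moment nu (S k) s) with
    (1 * moment nu k (s + h) + -1 * moment nu k s + - h * moment nu (S k) s) by ring.
  refine (RInt_gen_norm _ _ _ _ _ _ Icomb (is_RInt_gen_scal _ (h ^ 2) _ I4)).
  - exists (fun a => a < 1) (fun b => 1 < b).
    + exists (mkposreal 1 Rlt_0_1). intros y Hy _. apply ball_R_interval in Hy. simpl in Hy. lra.
    + exists 1. auto.
    + simpl. intros; lra.
  - exists (fun a => 0 < a) (fun b => 0 < b).
    + exists (mkposreal 1 Rlt_0_1). auto.
    + exists 0. auto.
    + simpl. intros a b Ha Hb t Ht. apply weight_taylor1_bound; auto. lra.
Qed.

Lemma is_derive_moment nu k s : 0 < nu -> is_derive (moment nu k) s (moment nu (S k) s).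
Proof.
  intros Hnu. apply is_derive_Reals. intros eps Heps.
  set (K := moment nu (S (S k)) (s + 1)).
  assert (HK : 0 < K) by (apply moment_pos; auto).
  assert (Hd : 0 < Rmin 1 (eps / (K + 1))).
  { apply Rmin_glb_lt; [lra|]. apply Rdiv_lt_0_compat; lra. }
  exists (mkposreal _ Hd). intros h Hh0 Hh. simpl in Hh.
  assert (Hh1 : Rabs h <= 1) by (left; apply Rlt_le_trans with (1 := Hh); apply Rmin_l).
  assert (Hh2 : Rabs h < eps / (K + 1)) by (apply Rlt_le_trans with (1 := Hh); apply Rmin_r).
  assert (B := moment_taylor1_bound nu k s h Hnu Hh1). fold K in B.
  assert (Hpos : 0 < Rabs h) by (apply Rabs_pos_lt; auto).
  replace ((moment nu k (s + h) - moment nu k s) / h - moment nu (S k) s)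
    with ((moment nu k (s + h) - moment nu k s - h * moment nu (S k) s) / h) by (field; auto).
  unfold Rdiv. rewrite Rabs_mult, Rabs_inv.
  apply Rle_lt_trans with (Rabs h * K).
  { rewrite <- (pow2_abs h) in B.
    replace (Rabs h * K) with (Rabs h ^ 2 * K * / Rabs h) by (field; lra).
    apply Rmult_le_compat_r; [left; apply Rinv_0_lt_compat|]; auto. }
  apply Rle_lt_trans with (eps / (K + 1) * K); [apply Rmult_le_compat_r; lra|].
  apply Rmult_lt_reg_r with (K + 1); [lra|].
  replace (eps / (K + 1) * K * (K + 1)) with (eps * K) by (field; lra). nra.
Qed.

Lemma moment_quadratic_pos nu s lam : 0 < nu ->
  0 < moment nu 2 s - 2 * lam * moment nu 1 s + lam ^ 2 * moment nu 0 s.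
Proof.
  intros Hnu.
  set (phi := fun t => 1 * weight nu 2 s t + (-2 * lam) * weight nu 1 s t
                       + lam ^ 2 * weight nu 0 s t).
  assert (Hphi : forall t, 0 < t -> phi t = weight nu 0 s t * (t - lam) ^ 2).
  { intros t Ht. unfold phi. rewrite (weight_S nu 1 s t Ht), (weight_S nu 0 s t Ht). ring. }
  destruct (moment_spec nu 0 s Hnu) as [I0 B0].
  destruct (moment_spec nu 1 s Hnu) as [I1 B1].
  destruct (moment_spec nu 2 s Hnu) as [I2 B2].
  assert (Hc : forall t, 0 < t -> continuous phi t).
  { intros t Ht. unfold phi.
    apply (continuous_plus (fun t => 1 * weight nu 2 s t + -2 * lam * weight nu 1 s t)
                           (fun t => lam ^ 2 * weight nu 0 s t));
      [apply (continuous_plus (fun t => 1 * weight nu 2 s t) (fun t => -2 * lam * weight nu 1 s t))|].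
    all: apply (continuous_mult (fun _ => _) (weight nu _ s));
      [apply continuous_const | apply weight_continuous; auto]. }
  pose proof (Rabs_pos lam).
  destruct (is_RInt_gen_nonneg_bounded phi
              (moment nu 2 s + 2 * Rabs lam * moment nu 1 s + lam ^ 2 * moment nu 0 s))
    as [L [IL BL]].
  - exact Hc.
  - intros t Ht. rewrite Hphi by auto.
    apply Rmult_le_pos; [left; apply weight_pos | apply pow2_ge_0].
  - intros a b Ha Hab.
    assert (Hex : forall j, ex_RInt (weight nu j s) a b)
      by (intros; apply ex_RInt_continuous_pos; auto; intros; apply weight_continuous; auto).
    replace (RInt phi a b) with (1 * RInt (weight nu 2 s) a b
               + -2 * lam * RInt (weight nu 1 s) a b + lam ^ 2 * RInt (weight nu 0 s) a b).
    2:{ symmetry. apply is_RInt_unique. unfold phi.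
        apply (is_RInt_plus (V := R_NormedModule)); [apply (is_RInt_plus (V := R_NormedModule))|];
          apply (is_RInt_scal (V := R_NormedModule)), (RInt_correct (V := R_CompleteNormedModule));
          auto. }
    assert (0 <= RInt (weight nu 1 s) a b)
      by (apply RInt_ge_0; auto; intros; left; apply weight_pos).
    specialize (B0 a b Ha Hab). specialize (B1 a b Ha Hab). specialize (B2 a b Ha Hab).
    pose proof (pow2_ge_0 lam). pose proof (Rle_abs (- lam)). rewrite Rabs_Ropp in *.
    nra.
  - assert (E : L = 1 * moment nu 2 s + -2 * lam * moment nu 1 s + lam ^ 2 * moment nu 0 s).
    { rewrite <- (is_RInt_gen_unique _ _ IL).
      exact (is_RInt_gen_unique _ _ (is_RInt_gen_plus _ _ _ _
        (is_RInt_gen_plus _ _ _ _ (is_RInt_gen_scal _ 1 _ I2) (is_RInt_gen_scal _ (-2 * lam) _ I1))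
        (is_RInt_gen_scal _ (lam ^ 2) _ I0))). }
    replace (moment nu 2 s - 2 * lam * moment nu 1 s + lam ^ 2 * moment nu 0 s) with L
      by (rewrite E; ring).
    apply Rlt_le_trans with (RInt phi (Rabs lam + 1) (Rabs lam + 2)); [|apply BL; lra].
    apply RInt_gt_0; [lra | | intros; apply Hc; lra].
    intros t Ht. rewrite Hphi by lra. apply Rmult_lt_0_compat; [apply weight_pos|].
    pose proof (Rle_abs lam). apply pow_lt. lra.
Qed.

(* Cauchy-Schwarz: minimize the positive quadratic above at [lam = M1 / M0]. *)
Lemma moment_log_convex nu s : 0 < nu ->
  0 < moment nu 2 s * moment nu 0 s - moment nu 1 s ^ 2.
Proof.
  intros Hnu. pose proof (moment_pos nu 0 s Hnu).
  pose proof (moment_quadratic_pos nu s (moment nu 1 s / moment nu 0 s) Hnu) as Hq.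
  apply Rmult_lt_reg_r with (/ moment nu 0 s); [apply Rinv_0_lt_compat; auto|].
  rewrite Rmult_0_l.
  replace ((moment nu 2 s * moment nu 0 s - moment nu 1 s ^ 2) * / moment nu 0 s)
    with (moment nu 2 s - 2 * (moment nu 1 s / moment nu 0 s) * moment nu 1 s
          + (moment nu 1 s / moment nu 0 s) ^ 2 * moment nu 0 s) by (field; lra).
  exact Hq.
Qed.

Definition psi_arg (a b sigma x : R) : R := (b * x - a) / (sigma * b) * sqrt (2 * b).

Definition psi_slope (b sigma : R) : R := sqrt (2 * b) / sigma.

Definition psi_core (a b sigma rho : R) (k : nat) (x : R) : R :=
  psi_slope b sigma ^ k * moment (rho / b) k (psi_arg a b sigma x).

Lemma psi_eq_core a b sigma rho x : 0 < b -> 0 < sigma ->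
  psi a b sigma rho x = / Gamma (- (- rho / b)) * psi_core a b sigma rho 0 x.
Proof.
  intros Hb Hsigma. unfold psi, Dpc, psi_core, moment. rewrite pow_O, Rmult_1_l.
  replace (RInt_gen _ _ _) with (RInt_gen (weight (rho / b) 0 (psi_arg a b sigma x))
                                   (at_right 0) (Rbar_locally p_infty)).
  2:{ f_equal. apply functional_extensionality. intros t. unfold weight, psi_arg. simpl INR.
      f_equal; f_equal; field; lra. }
  set (y := - ((b * x - a) / (sigma * b)) * sqrt (2 * b)).
  assert (Hy : y ^ 2 = ((b * x - a) / (sigma * b)) ^ 2 * 2 * b).
  { unfold y. replace ((- ((b * x - a) / (sigma * b)) * sqrt (2 * b)) ^ 2)
      with (((b * x - a) / (sigma * b)) ^ 2 * sqrt (2 * b) ^ 2) by ring.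
    rewrite pow2_sqrt by lra. ring. }
  assert (Hexp : exp ((b * x - a) ^ 2 / (2 * sigma ^ 2 * b)) * exp (- y ^ 2 / 4) = 1).
  { rewrite <- exp_plus, <- exp_0. f_equal. rewrite Hy. field. lra. }
  transitivity (exp ((b * x - a) ^ 2 / (2 * sigma ^ 2 * b)) * exp (- y ^ 2 / 4)
                / Gamma (- (- rho / b)) * RInt_gen (weight (rho / b) 0 (psi_arg a b sigma x))
                                            (at_right 0) (Rbar_locally p_infty)).
  - unfold Rdiv. ring.
  - rewrite Hexp. unfold Rdiv. ring.
Qed.

Lemma is_derive_psi_core a b sigma rho k x : 0 < b -> 0 < sigma -> 0 < rho ->
  is_derive (psi_core a b sigma rho k) x (psi_core a b sigma rho (S k) x).
Proof.
  intros Hb Hsigma Hrho. unfold psi_core.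
  assert (Harg : is_derive (psi_arg a b sigma) x (psi_slope b sigma)).
  { unfold psi_arg, psi_slope. auto_derive; auto. field. lra. }
  assert (H := is_derive_comp (K := R_AbsRing) (V := R_NormedModule) _ _ x _ _
                 (is_derive_moment (rho / b) k (psi_arg a b sigma x)
                    ltac:(apply Rdiv_lt_0_compat; auto)) Harg).
  replace (psi_slope b sigma ^ S k * moment (rho / b) (S k) (psi_arg a b sigma x))
    with (psi_slope b sigma ^ k * scal (psi_slope b sigma) (moment (rho / b) (S k) (psi_arg a b sigma x)))
    by (change scal with Rmult; simpl; ring).
  exact (is_derive_scal _ _ _ _ H).
Qed.

Lemma Derive_n_psi a b sigma rho n x : 0 < b -> 0 < sigma -> 0 < rho ->
  Derive_n (psi a b sigma rho) n x = / Gamma (- (- rho / b)) * psi_core a b sigma rho n x.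
Proof.
  intros Hb Hsigma Hrho. revert x. induction n as [|n IH]; intros x; simpl.
  - apply psi_eq_core; auto.
  - rewrite (Derive_ext _ _ _ IH).
    apply is_derive_unique, is_derive_scal, is_derive_psi_core; auto.
Qed.

Lemma psi_slope_pos b sigma : 0 < b -> 0 < sigma -> 0 < psi_slope b sigma.
Proof. intros Hb Hsigma. apply Rdiv_lt_0_compat; auto. apply sqrt_lt_R0. lra. Qed.

Lemma psi_core_pos a b sigma rho k x : 0 < b -> 0 < sigma -> 0 < rho ->
  0 < psi_core a b sigma rho k x.
Proof.
  intros Hb Hsigma Hrho. apply Rmult_lt_0_compat.
  - apply pow_lt, psi_slope_pos; auto.
  - apply moment_pos, Rdiv_lt_0_compat; auto.
Qed.

Lemma psi_core_log_convex a b sigma rho x : 0 < b -> 0 < sigma -> 0 < rho ->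
  0 < psi_core a b sigma rho 2 x * psi_core a b sigma rho 0 x - psi_core a b sigma rho 1 x ^ 2.
Proof.
  intros Hb Hsigma Hrho. unfold psi_core.
  set (m := moment (rho / b)). set (l := psi_arg a b sigma x). set (k := psi_slope b sigma).
  replace (k ^ 2 * m 2%nat l * (k ^ 0 * m 0%nat l) - (k ^ 1 * m 1%nat l) ^ 2)
    with (k ^ 2 * (m 2%nat l * m 0%nat l - m 1%nat l ^ 2)) by ring.
  apply Rmult_lt_0_compat.
  - apply pow_lt, psi_slope_pos; auto.
  - apply moment_log_convex, Rdiv_lt_0_compat; auto.
Qed.

Fixpoint Cn (lo : R) (n : nat) (f : R -> R) : Prop :=
  match n with
  | O => forall x, lo < x -> continuous f x
  | S m => (forall x, lo < x -> ex_derive f x) /\ Cn lo m (Derive f)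
  end.

Lemma locally_eq_gt lo (f g : R -> R) x : lo < x -> (forall y, lo < y -> f y = g y) ->
  locally x (fun y => f y = g y).
Proof.
  intros Hx Hfg. destruct (open_gt lo x Hx) as [e He]. exists e. intros y Hy. apply Hfg, He, Hy.
Qed.

Lemma Cn_ext lo n : forall f g, Cn lo n f -> (forall x, lo < x -> f x = g x) -> Cn lo n g.
Proof.
  induction n as [|n IH]; intros f g Hf Hfg; simpl in *.
  - intros x Hx. apply (continuous_ext_loc (T := R_UniformSpace) (U := R_UniformSpace) g f x); auto.
    apply locally_eq_gt with lo; auto.
  - destruct Hf as [Hd Hn]. split.
    + intros x Hx. apply (ex_derive_ext_loc (K := R_AbsRing) (V := R_NormedModule) f); auto.
      apply locally_eq_gt with lo; auto.
    + apply IH with (Derive f); auto.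
      intros x Hx. apply Derive_ext_loc, locally_eq_gt with lo; auto.
Qed.

Lemma Cn_continuous lo n f x : Cn lo n f -> lo < x -> continuous f x.
Proof.
  destruct n as [|n]; simpl; [auto|].
  intros [Hd _] Hx. apply continuous_of_ex_derive; auto.
Qed.

Lemma Cn_pred lo n f : Cn lo (S n) f -> Cn lo n f.
Proof.
  revert f. induction n as [|n IH]; intros f Hf.
  - intros x. apply (Cn_continuous lo 1 f x Hf).
  - destruct Hf as [Hd Hn]. split; auto.
Qed.

Lemma Cn_const lo n a : Cn lo n (fun _ => a).
Proof.
  revert a. induction n as [|n IH]; intros a; simpl.
  - intros; apply continuous_const.
  - split.
    + intros; apply (ex_derive_const (K := R_AbsRing) (V := R_NormedModule)).
    + apply Cn_ext with (fun _ => 0); auto. intros x _. rewrite Derive_const. auto.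
Qed.

Lemma Cn_id lo n : Cn lo n (fun x => x).
Proof.
  destruct n as [|n]; simpl.
  - intros; apply continuous_id.
  - split.
    + intros; apply (ex_derive_id (K := R_AbsRing)).
    + apply Cn_ext with (fun _ => 1); [apply Cn_const|]. intros x _. symmetry. apply Derive_id.
Qed.

Lemma Cn_plus lo n : forall f g, Cn lo n f -> Cn lo n g -> Cn lo n (fun x => f x + g x).
Proof.
  induction n as [|n IH]; intros f g Hf Hg; simpl in *.
  - intros x Hx. apply (continuous_plus f g); auto.
  - destruct Hf as [Hf1 Hf2], Hg as [Hg1 Hg2]. split.
    + intros x Hx. apply (ex_derive_plus (K := R_AbsRing) (V := R_NormedModule)); auto.
    + apply Cn_ext with (fun x => Derive f x + Derive g x); auto.
      intros x Hx. rewrite Derive_plus; auto.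
Qed.

Lemma Cn_mult lo n : forall f g, Cn lo n f -> Cn lo n g -> Cn lo n (fun x => f x * g x).
Proof.
  induction n as [|n IH]; intros f g Hf Hg.
  - simpl in *. intros x Hx. apply (continuous_mult f g); auto.
  - pose proof (Cn_pred lo n f Hf). pose proof (Cn_pred lo n g Hg).
    destruct Hf as [Hf1 Hf2], Hg as [Hg1 Hg2]. split.
    + intros x Hx. apply ex_derive_mult; auto.
    + apply Cn_ext with (fun x => Derive f x * g x + f x * Derive g x).
      * apply Cn_plus; apply IH; auto.
      * intros x Hx. rewrite Derive_mult; auto.
Qed.

Lemma Cn_minus lo n f g : Cn lo n f -> Cn lo n g -> Cn lo n (fun x => f x - g x).
Proof.
  intros Hf Hg. apply Cn_ext with (fun x => f x + (-1) * g x).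
  - apply Cn_plus, Cn_mult; auto. apply Cn_const.
  - intros; ring.
Qed.

Lemma Cn_inv lo n : forall f, Cn lo n f -> (forall x, lo < x -> f x <> 0) ->
  Cn lo n (fun x => / f x).
Proof.
  induction n as [|n IH]; intros f Hf Hnz.
  - simpl in *. intros x Hx. apply continuous_comp; auto.
    apply continuous_of_ex_derive, ex_derive_Reals_1, derivable_pt_inv; auto.
    apply derivable_pt_id.
  - pose proof (Cn_pred lo n f Hf). destruct Hf as [Hf1 Hf2]. split.
    + intros x Hx. apply ex_derive_inv; auto.
    + apply Cn_ext with (fun x => (-1) * Derive f x * (/ f x * / f x)).
      * apply Cn_mult; [apply Cn_mult; [apply Cn_const | auto] | apply Cn_mult; apply IH; auto].
      * intros x Hx. rewrite Derive_inv; auto. specialize (Hnz x Hx). field. auto.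
Qed.

Lemma Cn_derive_chain lo (f : nat -> R -> R) :
  (forall k x, lo < x -> is_derive (f k) x (f (S k) x)) -> forall n k, Cn lo n (f k).
Proof.
  intros Hd n. induction n as [|n IH]; intros k; simpl.
  - intros x Hx. apply continuous_of_ex_derive. eexists. apply Hd; auto.
  - split.
    + intros x Hx. eexists. apply Hd; auto.
    + apply Cn_ext with (f (S k)); auto. intros x Hx. symmetry. apply is_derive_unique. auto.
Qed.

Lemma Cn_ex_derive_n lo n f x : Cn lo n f -> lo < x -> ex_derive_n f n x.
Proof.
  revert f. destruct n as [|n]; [simpl; auto|].
  induction n as [|n IH]; intros f Hf Hx.
  - apply Hf; auto.
  - destruct Hf as [_ Hf]. specialize (IH (Derive f) Hf Hx). simpl in IH |- *.
    apply ex_derive_ext with (2 := IH). intros t.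
    change (Derive_n (Derive_n f 1) n t = Derive_n f (S n) t).
    rewrite Derive_n_comp. f_equal. lia.
Qed.

Lemma filterlim_dist_at_right x : filterlim (fun z => z - x) (at_right x) (at_right 0).
Proof.
  intros P [e He]. exists e. intros z Hz Hxz. apply He; [|lra].
  apply ball_R_interval in Hz. change (Rabs (z - x - 0) < e). apply Rabs_def1; lra.
Qed.

Lemma filterlim_inv_dist_at_right x K : 0 < K ->
  filterlim (fun z => K / (z - x)) (at_right x) (Rbar_locally p_infty).
Proof.
  intros HK. intros P [M HP].
  assert (Hinv := filterlim_comp _ _ _ _ Rinv _ _ _
                   (filterlim_dist_at_right x) filterlim_Rinv_0_right).
  change (at_right x (fun z => P (K / (z - x)))).
  apply (filter_imp (fun z => Rmax M 0 / K < / (z - x))).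
  2:{ apply Hinv. exists (Rmax M 0 / K). auto. }
  intros z Hz. apply HP.
  apply Rmult_lt_compat_l with (r := K) in Hz; auto.
  replace (K * (Rmax M 0 / K)) with (Rmax M 0) in Hz by (field; lra).
  pose proof (Rmax_l M 0). unfold Rdiv. lra.
Qed.

Lemma filterlim_ln_dist_at_right x :
  filterlim (fun z => ln (z - x)) (at_right x) (Rbar_locally m_infty).
Proof. exact (filterlim_comp _ _ _ _ ln _ _ _ (filterlim_dist_at_right x) is_lim_ln_0). Qed.

Lemma filterlim_ge_inv_dist_p_infty (f : R -> R) x K : 0 < K ->
  at_right x (fun z => K / (z - x) <= f z) -> filterlim f (at_right x) (Rbar_locally p_infty).
Proof. intros HK Hf. exact (filterlim_ge_p_infty _ f Hf (filterlim_inv_dist_at_right x K HK)). Qed.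

Lemma filterlim_sub_mul_ln_dist_at_right x A K : 0 < K ->
  filterlim (fun y => A - K * ln (y - x)) (at_right x) (Rbar_locally p_infty).
Proof.
  intros HK P [M HP].
  change (at_right x (fun y => P (A - K * ln (y - x)))).
  apply (filter_imp (fun y => ln (y - x) < (A - M) / K)).
  2:{ apply (filterlim_ln_dist_at_right x (fun u => u < (A - M) / K)).
      exists ((A - M) / K). auto. }
  intros y Hy. apply HP.
  apply Rmult_lt_compat_l with (r := K) in Hy; auto.
  replace (K * ((A - M) / K)) with (A - M) in Hy by (field; lra).
  lra.
Qed.

Lemma is_RInt_inv_dist x K u v : x < u <= v ->
  is_RInt (fun z => K / (z - x)) u v (K * ln (v - x) - K * ln (u - x)).
Proof.
  intros Huv. apply (is_RInt_derive (V := R_CompleteNormedModule) (fun z => K * ln (z - x))).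
  - intros z Hz. rewrite Rmin_left, Rmax_right in Hz by lra.
    auto_derive; [lra | field; lra].
  - intros z Hz. rewrite Rmin_left, Rmax_right in Hz by lra.
    apply continuous_of_ex_derive. auto_derive. lra.
Qed.

Section RIntLower.

Variables (Th : R -> R) (lo b : R).
Hypothesis Th_continuous : forall z, lo < z -> continuous Th z.
Hypothesis lo_lt_b : lo < b.

Let F (y : R) : R := RInt Th y b.

Lemma ex_RInt_gt u v : lo < u -> lo < v -> ex_RInt Th u v.
Proof.
  intros Hu Hv. apply (ex_RInt_continuous (V := R_CompleteNormedModule)). intros z Hz.
  apply Th_continuous. apply Rlt_le_trans with (2 := proj1 Hz).
  unfold Rmin. destruct Rle_dec; lra.
Qed.

Lemma RInt_lower_Chasles x y : lo < x -> lo < y -> F x = RInt Th x y + F y.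
Proof.
  intros Hx Hy. symmetry. exact (RInt_Chasles (V := R_CompleteNormedModule) Th x y b
                                  (ex_RInt_gt x y Hx Hy) (ex_RInt_gt y b Hy lo_lt_b)).
Qed.

Lemma is_derive_RInt_lower x : lo < x -> is_derive F x (- Th x).
Proof.
  intros Hx. apply (is_derive_RInt' (V := R_NormedModule) Th F x b); auto.
  destruct (open_gt lo x Hx) as [e He]. exists e. intros y Hy.
  apply (RInt_correct (V := R_CompleteNormedModule)), ex_RInt_gt; auto.
Qed.

Lemma Cn_RInt_lower n : Cn lo n Th -> Cn lo (S n) F.
Proof.
  intros HTh. split.
  - intros x Hx. eexists. apply is_derive_RInt_lower; auto.
  - apply Cn_ext with (fun x => (-1) * Th x).
    + apply Cn_mult; auto. apply Cn_const.
    + intros x Hx. rewrite (is_derive_unique _ _ _ (is_derive_RInt_lower x Hx)). ring.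
Qed.

Lemma RInt_lower_decreasing x y : (forall z, x < z < y -> 0 < Th z) ->
  lo < x -> x < y -> F y < F x.
Proof.
  intros Hpos Hx Hxy. rewrite (RInt_lower_Chasles x y) by lra.
  assert (0 < RInt Th x y); [|lra].
  apply RInt_gt_0; auto. intros; apply Th_continuous; lra.
Qed.

(* A lower bound [K / (z - lo)] is not integrable at [lo]. *)
Lemma filterlim_RInt_lower_p_infty K : 0 < K ->
  at_right lo (fun z => K / (z - lo) <= Th z) -> filterlim F (at_right lo) (Rbar_locally p_infty).
Proof.
  intros HK [d Hd].
  set (e := lo + d / 2).
  assert (Hbound : forall z, lo < z <= e -> K / (z - lo) <= Th z).
  { intros z Hz. apply Hd; [|lra]. change (Rabs (z - lo) < d).
    pose proof (cond_pos d). apply Rabs_def1; unfold e in Hz; lra. }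
  assert (Hlo_e : 0 < e - lo) by (pose proof (cond_pos d); unfold e; lra).
  apply filterlim_ge_p_infty with (fun y => F e + K * ln (e - lo) - K * ln (y - lo)).
  - exists (mkposreal _ Hlo_e). intros y Hy Hly. apply ball_R_interval in Hy. simpl in Hy.
    rewrite (RInt_lower_Chasles y e) by lra.
    assert (Hln := is_RInt_inv_dist lo K y e ltac:(lra)).
    assert (K * ln (e - lo) - K * ln (y - lo) <= RInt Th y e); [|lra].
    rewrite <- (is_RInt_unique _ _ _ _ Hln).
    apply RInt_le; [lra | eexists; exact Hln | apply ex_RInt_gt; lra |].
    intros z Hz. apply Hbound. lra.
  - apply filterlim_sub_mul_ln_dist_at_right; auto.
Qed.

End RIntLower.

Lemma ratio_ge_inv_dist_at_right (f h : R -> R) x l :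
  continuous f x -> 0 < f x -> h x = 0 -> is_derive h x l -> (forall z, x < z -> 0 < h z) ->
  exists K, 0 < K /\ at_right x (fun z => K / (z - x) <= f z / h z).
Proof.
  intros Hf Hfx Hhx Hh Hpos.
  assert (Hlim : locally x (fun z => f x / 2 < f z)).
  { apply (Hf (fun y => f x / 2 < y)). exists (mkposreal (f x / 2) ltac:(lra)).
    intros y Hy. apply ball_R_interval in Hy. simpl in Hy. lra. }
  destruct Hlim as [d1 Hd1].
  destruct (proj1 (is_derive_Reals _ _ _) Hh 1 Rlt_0_1) as [d2 Hd2].
  set (C := Rabs l + 1). assert (HC : 0 < C) by (pose proof (Rabs_pos l); unfold C; lra).
  exists (f x / 2 / C). split; [apply Rdiv_lt_0_compat; lra|].
  exists (mkposreal _ (Rmin_pos _ _ (cond_pos d1) (cond_pos d2))).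
  intros z Hz Hxz. change R in z. apply ball_R_interval in Hz. simpl in Hz.
  pose proof (Rmin_l d1 d2). pose proof (Rmin_r d1 d2).
  assert (Hfz : f x / 2 < f z).
  { apply Hd1. change (Rabs (z - x) < d1). apply Rabs_def1; lra. }
  assert (Hhz : h z < C * (z - x)).
  { specialize (Hd2 (z - x) ltac:(lra) ltac:(rewrite Rabs_pos_eq; lra)).
    replace (x + (z - x)) with z in Hd2 by ring. rewrite Hhx, Rminus_0_r in Hd2.
    apply Rabs_def2 in Hd2. destruct Hd2 as [Hd2 _].
    pose proof (Rle_abs l).
    apply Rmult_lt_compat_r with (r := z - x) in Hd2; [|lra].
    unfold Rdiv in Hd2. rewrite Rmult_minus_distr_r, Rmult_assoc, Rinv_l in Hd2 by lra.
    unfold C. nra. }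
  specialize (Hpos z Hxz).
  apply Rle_trans with (f x / 2 / h z).
  - unfold Rdiv. rewrite Rmult_assoc. apply Rmult_le_compat_l; [lra|].
    rewrite <- Rinv_mult. apply Rinv_le_contravar; [lra|]. lra.
  - unfold Rdiv. apply Rmult_le_compat_r; [left; apply Rinv_0_lt_compat|]; lra.
Qed.

Section TangentGaps.

Variable Q : nat -> R -> R.
Hypothesis Q_derive : forall k z, is_derive (Q k) z (Q (S k) z).
Hypothesis Q_pos : forall k z, 0 < Q k z.
Hypothesis Q_log_convex : forall z, 0 < Q 2%nat z * Q 0%nat z - Q 1%nat z ^ 2.
Variables c alpha : R.

Definition tangent_gap (k : nat) (z : R) : R := (z - c) * Q (S k) z - Q k z.

Definition wronskian (z : R) : R := Q 2%nat z * Q 0%nat z - Q 1%nat z ^ 2.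

Definition theta_coef (z : R) : R :=
  - ((Q 3%nat z * tangent_gap 0 z - Q 2%nat z * tangent_gap 1 z) * Q 0%nat z)
  / (alpha * wronskian z).

Definition theta (z : R) : R := theta_coef z / tangent_gap 1 z.

Lemma is_derive_tangent_gap k z : is_derive (tangent_gap k) z ((z - c) * Q (S (S k)) z).
Proof.
  assert (Hlin : is_derive (fun u => u - c) z 1) by (auto_derive; auto; ring).
  assert (H := is_derive_minus _ _ _ _ _
                 (is_derive_mult _ _ _ _ _ Hlin (Q_derive (S k) z) Rmult_comm) (Q_derive k z)).
  replace ((z - c) * Q (S (S k)) z)
    with (minus (plus (mult 1 (Q (S k) z)) (mult (z - c) (Q (S (S k)) z))) (Q (S k) z));
    [exact H|].
  unfold minus, plus, mult, opp; simpl. ring.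
Qed.

Lemma tangent_gap_increasing k u v : c <= u -> u < v -> tangent_gap k u < tangent_gap k v.
Proof.
  intros Hu Huv.
  destruct (MVT_cor2 (tangent_gap k) (fun z => (z - c) * Q (S (S k)) z) u v Huv) as [z [Hz Hzuv]].
  { intros z _. apply is_derive_Reals, is_derive_tangent_gap. }
  pose proof (Q_pos (S (S k)) z).
  assert (0 < (z - c) * Q (S (S k)) z * (v - u)) by (apply Rmult_lt_0_compat; nra).
  lra.
Qed.

Lemma lt_of_tangent_gap_root k z : tangent_gap k z = 0 -> c < z.
Proof.
  unfold tangent_gap. intros H. pose proof (Q_pos k z). pose proof (Q_pos (S k) z).
  assert (0 < (z - c) * Q (S k) z) by lra. nra.
Qed.

(* Log-convexity of [Q 0] is exactly what makes the first gap negative where the second vanishes. *)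
Lemma tangent_gap0_neg_at_root1 z : tangent_gap 1 z = 0 -> tangent_gap 0 z < 0.
Proof.
  unfold tangent_gap. intros Hh.
  pose proof (Q_pos 2 z). pose proof (Q_log_convex z).
  apply Rmult_lt_reg_r with (Q 2%nat z); auto. rewrite Rmult_0_l.
  replace (((z - c) * Q 1%nat z - Q 0%nat z) * Q 2%nat z)
    with ((z - c) * Q 2%nat z * Q 1%nat z - Q 2%nat z * Q 0%nat z) by ring.
  replace ((z - c) * Q 2%nat z) with (Q 1%nat z) by lra. lra.
Qed.

Variables x0 xinf : R.
Hypothesis alpha_pos : 0 < alpha.
Hypothesis tangent_gap0_x0 : tangent_gap 0 x0 = 0.
Hypothesis tangent_gap1_xinf : tangent_gap 1 xinf = 0.

Lemma tangent_gap0_neg z : c <= z -> z < x0 -> tangent_gap 0 z < 0.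
Proof. intros. rewrite <- tangent_gap0_x0. apply tangent_gap_increasing; auto. Qed.

Lemma xinf_lt_x0 : xinf < x0.
Proof.
  pose proof (lt_of_tangent_gap_root 0 x0 tangent_gap0_x0) as Hc.
  destruct (Rlt_or_le xinf x0) as [H | [H | H]]; auto; exfalso.
  - pose proof (tangent_gap0_neg_at_root1 xinf tangent_gap1_xinf).
    pose proof (tangent_gap_increasing 0 x0 xinf ltac:(lra) H). lra.
  - pose proof (tangent_gap0_neg_at_root1 xinf tangent_gap1_xinf). subst. lra.
Qed.

Lemma tangent_gap1_pos z : xinf < z -> 0 < tangent_gap 1 z.
Proof.
  intros. pose proof (lt_of_tangent_gap_root 1 xinf tangent_gap1_xinf). rewrite <- tangent_gap1_xinf. apply tangent_gap_increasing; lra. Qed.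

Lemma theta_coef_pos z : xinf <= z < x0 -> 0 < theta_coef z.
Proof.
  intros Hz. unfold theta_coef.
  pose proof (lt_of_tangent_gap_root 1 xinf tangent_gap1_xinf).
  assert (Hg : tangent_gap 0 z < 0) by (apply tangent_gap0_neg; lra).
  assert (Hh : 0 <= tangent_gap 1 z).
  { destruct (proj1 Hz) as [Hlt | <-]; [left; apply tangent_gap1_pos | right]; auto. }
  pose proof (Q_pos 3 z). pose proof (Q_pos 2 z). pose proof (Q_pos 0 z).
  assert (Q 3%nat z * tangent_gap 0 z - Q 2%nat z * tangent_gap 1 z < 0) by nra.
  apply Rdiv_lt_0_compat; [nra|]. apply Rmult_lt_0_compat; [lra | apply Q_log_convex].
Qed.

Lemma theta_pos z : xinf < z < x0 -> 0 < theta z.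
Proof.
  intros Hz. apply Rdiv_lt_0_compat; [apply theta_coef_pos | apply tangent_gap1_pos]; lra.
Qed.

Lemma Cn_tangent_gap lo n k : Cn lo n (tangent_gap k).
Proof.
  assert (HQ : forall j, Cn lo n (Q j))
    by (intros; apply Cn_derive_chain; intros; apply Q_derive).
  apply Cn_minus; auto. apply Cn_mult; auto. apply Cn_minus; [apply Cn_id | apply Cn_const].
Qed.

Lemma Cn_theta_coef lo n : Cn lo n theta_coef.
Proof.
  assert (HQ : forall j, Cn lo n (Q j))
    by (intros; apply Cn_derive_chain; intros; apply Q_derive).
  assert (HW : Cn lo n wronskian).
  { apply Cn_minus; [apply Cn_mult; auto|].
    apply Cn_ext with (fun z => Q 1%nat z * Q 1%nat z); [apply Cn_mult; auto | intros; ring]. }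
  apply Cn_mult.
  - apply Cn_ext with (fun z => (-1) * ((Q 3%nat z * tangent_gap 0 z - Q 2%nat z * tangent_gap 1 z)
                                        * Q 0%nat z)); [|intros; ring].
    repeat apply Cn_mult; auto using Cn_const.
    apply Cn_minus; apply Cn_mult; auto using Cn_tangent_gap.
  - apply Cn_inv; [apply Cn_mult; auto using Cn_const|].
    intros z _. apply Rgt_not_eq, Rmult_lt_0_compat; [lra | apply Q_log_convex].
Qed.

Lemma Cn_theta n : Cn xinf n theta.
Proof.
  apply Cn_mult; [apply Cn_theta_coef|].
  apply Cn_inv; [apply Cn_tangent_gap|]. intros z Hz. apply Rgt_not_eq, tangent_gap1_pos; auto.
Qed.

(* The second gap has a simple zero at [xinf]. *)
Lemma theta_ge_inv_dist : exists K, 0 < K /\ at_right xinf (fun z => K / (z - xinf) <= theta z).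
Proof.
  apply ratio_ge_inv_dist_at_right with ((xinf - c) * Q 3%nat xinf).
  - apply (Cn_continuous (xinf - 1) 0); [apply Cn_theta_coef | lra].
  - apply theta_coef_pos. split; [lra | apply xinf_lt_x0].
  - exact tangent_gap1_xinf.
  - apply is_derive_tangent_gap.
  - apply tangent_gap1_pos.
Qed.

Lemma RInt_theta_properties (Th : R -> R) : (forall z, xinf < z -> Th z = theta z) ->
  let F := fun x => RInt Th x x0 in
  (forall x y, xinf < x -> x < y -> y < x0 -> F y < F x) /\
  (forall (n : nat) (x : R), xinf < x <= x0 -> ex_derive_n F n x) /\
  filterlim F (at_right xinf) (Rbar_locally p_infty) /\
  filterlim (Derive F) (at_right xinf) (Rbar_locally m_infty).
Proof.
  intros HTh F. pose proof xinf_lt_x0.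
  assert (HCn : forall n, Cn xinf n Th)
    by (intros n; apply Cn_ext with theta; [apply Cn_theta | intros; symmetry; auto]).
  assert (Hcont : forall z, xinf < z -> continuous Th z) by (intros; apply (HCn 0%nat); auto).
  destruct theta_ge_inv_dist as [K [HK [d Hd]]].
  assert (Hbound : at_right xinf (fun z => K / (z - xinf) <= Th z)).
  { exists d. intros z Hz Hxz. rewrite HTh; auto. }
  split; [|split; [|split]].
  - intros x y Hx Hxy Hy. apply (RInt_lower_decreasing Th xinf x0); auto.
    intros z Hz. rewrite HTh by lra. apply theta_pos. lra.
  - intros n x [Hx _]. apply Cn_ex_derive_n with xinf; auto.
    apply Cn_pred, Cn_RInt_lower; auto.
  - apply filterlim_RInt_lower_p_infty with K; auto.
  - apply (filterlim_ext_loc (fun z => - Th z)).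
    + exists (mkposreal 1 Rlt_0_1). intros z _ Hz. symmetry.
      apply is_derive_unique, (is_derive_RInt_lower Th xinf); auto.
    + exact (filterlim_comp _ _ _ _ Ropp _ _ _
               (filterlim_ge_inv_dist_p_infty Th xinf K HK Hbound) (filterlim_Rbar_opp p_infty)).
Qed.

End TangentGaps.

Lemma Theta_eq_theta a b sigma rho c alpha z : 0 < b -> 0 < sigma -> 0 < rho -> 0 < alpha ->
  Gamma (- (- rho / b)) <> 0 -> tangent_gap (psi_core a b sigma rho) c 1 z <> 0 ->
  Theta a b sigma rho c alpha z = theta (psi_core a b sigma rho) c alpha z.
Proof.
  intros Hb Hsigma Hrho Halpha HG Hh.
  pose proof (psi_core_log_convex a b sigma rho z Hb Hsigma Hrho).
  unfold Theta, theta, theta_coef, wronskian. cbv zeta.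
  rewrite !Derive_n_psi, psi_eq_core by auto.
  unfold tangent_gap in *. field. repeat split; auto; lra.
Qed.

Lemma tangent_gap_psi a b sigma rho c k y : 0 < b -> 0 < sigma -> 0 < rho ->
  (y - c) * Derive_n (psi a b sigma rho) (S k) y - Derive_n (psi a b sigma rho) k y
  = / Gamma (- (- rho / b)) * tangent_gap (psi_core a b sigma rho) c k y.
Proof. intros. rewrite !Derive_n_psi by auto. unfold tangent_gap. ring. Qed.

Theorem proposition4p7 (a b sigma rho c alpha x0 xinf : R)
  (hb : 0 < b) (hsigma : 0 < sigma) (hrho : 0 < rho) (hc : 0 < c) (halpha : 0 < alpha)
  (hx0 : c < x0)
  (hx0eq : (x0 - c) * Derive_n (psi a b sigma rho) 1 x0 - psi a b sigma rho x0 = 0)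
  (hx0uniq : forall y, c < y ->
     (y - c) * Derive_n (psi a b sigma rho) 1 y - psi a b sigma rho y = 0 -> y = x0)
  (hxinf : c < xinf)
  (hxinfeq : (xinf - c) * Derive_n (psi a b sigma rho) 2 xinf
               - Derive_n (psi a b sigma rho) 1 xinf = 0)
  (hxinfuniq : forall y, c < y ->
     (y - c) * Derive_n (psi a b sigma rho) 2 y - Derive_n (psi a b sigma rho) 1 y = 0 ->
     y = xinf) :
  let F := Ffun a b sigma rho c alpha x0 in
  (forall x y, xinf < x -> x < y -> y < x0 -> F y < F x) /\
  (forall (n : nat) (x : R), xinf < x <= x0 -> ex_derive_n F n x) /\
  filterlim F (at_right xinf) (Rbar_locally p_infty) /\
  filterlim (Derive F) (at_right xinf) (Rbar_locally m_infty).
Proof.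
  set (Q := psi_core a b sigma rho). set (C := / Gamma (- (- rho / b))).
  change (psi a b sigma rho x0) with (Derive_n (psi a b sigma rho) 0 x0) in hx0eq.
  rewrite tangent_gap_psi in hx0eq, hxinfeq by auto.
  (* With the junk value [/ 0 = 0], [Gamma = 0] would make [psi] vanish, so that every [y > c]
     would solve the equation defining [x0]. *)
  assert (HC : C <> 0).
  { intros HC. assert (x0 + 1 = x0); [|lra].
    apply hx0uniq; [lra|].
    change (psi a b sigma rho (x0 + 1)) with (Derive_n (psi a b sigma rho) 0 (x0 + 1)).
    rewrite tangent_gap_psi by auto. fold C. rewrite HC. ring. }
  assert (HG : Gamma (- (- rho / b)) <> 0) by (intros HG; apply HC; unfold C; rewrite HG; apply Rinv_0).
  assert (HQd : forall k z, is_derive (Q k) z (Q (S k) z)) by (intros; apply is_derive_psi_core; auto).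
  assert (HQpos : forall k z, 0 < Q k z) by (intros; apply psi_core_pos; auto).
  assert (HQlc : forall z, 0 < Q 2%nat z * Q 0%nat z - Q 1%nat z ^ 2)
    by (intros; apply psi_core_log_convex; auto).
  assert (Hh : tangent_gap Q c 1 xinf = 0)
    by (apply (Rmult_eq_reg_l C); auto; rewrite Rmult_0_r; exact hxinfeq).
  apply (RInt_theta_properties Q HQd HQpos HQlc c alpha x0 xinf); auto.
  - apply (Rmult_eq_reg_l C); auto. rewrite Rmult_0_r. exact hx0eq.
  - intros z Hz. apply Theta_eq_theta; auto.
    apply Rgt_not_eq, (tangent_gap1_pos Q HQd HQpos c xinf); auto.
Qed.
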